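(* Let $\Theta$ and $\Theta'$ be spaces of input histories satisfying the free-choice condition, with $E^\Theta\cap E^{\Theta'}=\emptyset$. Then the causal completions of the parallel composition $\Theta\cup\Theta'$ are $$\mathrm{CC}(\Theta\cup\Theta')=\{\hat\Theta\cup\hat\Theta':\ \hat\Theta\in\mathrm{CC}(\Theta),\ \hat\Theta'\in\mathrm{CC}(\Theta')\}.$$
   Context: A partial function is a function $f$ with domain $\mathrm{dom}(f)$ a subset of an index set, taking values in given sets; ordered by restriction ($f\le g$ iff $\mathrm{dom}(f)\subseteq\mathrm{dom}(g)$, $g|_{\mathrm{dom}(f)}=f$). Compatible = agreeing on common domain; a compatible set $\mathcal F$ has join $\bigvee\mathcal F$ (union). A set $\Theta$ is $\vee$-prime if for compatible $\mathcal F\subseteq\Theta$ with $\bigvee\mathcal F\in\Theta$ we have $\bigvee\mathcal F\in\mathcal F$. A space of input histories is a finite $\vee$-prime set of partial functions; $E^\Theta=\bigcup_{h\in\Theta}\mathrm{dom}(h)$, $I^\Theta_\omega=\{h(\omega):h\in\Theta,\omega\in\mathrm{dom}(h)\}$, $\mathrm{Ext}(\Theta)=\{\bigvee\mathcal F:\emptyset\ne\mathcal F\subseteq\Theta\text{ compatible}\}$. Free-choice: maximal elements of $\mathrm{Ext}(\Theta)$ are exactly the total functions in $\prod_{\omega\in E^\Theta}I^\Theta_\omega$. $\mathrm{tips}_\Theta(h)=\mathrm{dom}(h)\setminus\bigcup\{\mathrm{dom}(k):k\in\mathrm{Ext}(\Theta),k<h\}$. Causally complete: free-choice and $|\mathrm{tips}_\Theta(h)|=1$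 for all $h\in\Theta$. Spaces are ordered by $\Theta_1\le\Theta_2$ iff $\mathrm{Ext}(\Theta_1)\supseteq\mathrm{Ext}(\Theta_2)$. The causal completions $\mathrm{CC}(\Theta)$ of a space $\Theta$ satisfying free choice are the maximal elements of $\{\Theta_1\le\Theta:\Theta_1\text{ causally complete}\}$. The parallel composition of spaces with disjoint event sets is their set-theoretic union. *)

From HB Require Import structures.
From mathcomp Require Import all_boot.
From mathcomp Require Export finmap.
Set Implicit Arguments. Unset Strict Implicit. Unset Printing Implicit Defensive.
Local Open Scope fset_scope.
Local Open Scope fmap_scope.

Section Histories.
Variables (Ev V : choiceType).

Definition pfun := {fmap Ev -> V}.

Definition pf_le (f g : pfun) : Prop :=
  domf f `<=` domf g /\ forall x, x \in domf f -> g.[? x] = f.[? x].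

Definition pf_lt (f g : pfun) : Prop := pf_le f g /\ f <> g.

Definition compatible (F : {fset pfun}) : Prop :=
  forall f g, f \in F -> g \in F ->
  forall x, x \in domf f -> x \in domf g -> f.[? x] = g.[? x].

Definition is_join (F : {fset pfun}) (k : pfun) : Prop :=
  (forall x, x \in domf k <-> exists2 f, f \in F & x \in domf f) /\
  (forall f, f \in F -> pf_le f k).

Definition vee_prime (Th : {fset pfun}) : Prop :=
  forall F : {fset pfun}, F `<=` Th -> compatible F ->
  forall k, is_join F k -> k \in Th -> k \in F.

(* Space of input histories: finite (built into {fset _}) ∨-prime set. *)
Definition space (Th : {fset pfun}) : Prop := vee_prime Th.

Definition in_events (Th : {fset pfun}) (w : Ev) : Prop :=
  exists2 h, h \in Th & w \in domf h.

Definition in_inputs (Th : {fset pfun}) (w : Ev) (v : V) : Prop :=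
  exists2 h, h \in Th & h.[? w] = Some v.

Definition Ext (Th : {fset pfun}) (k : pfun) : Prop :=
  exists F : {fset pfun},
    [/\ F != fset0, F `<=` Th, compatible F & is_join F k].

Definition maximal_Ext (Th : {fset pfun}) (k : pfun) : Prop :=
  Ext Th k /\ forall k', Ext Th k' -> pf_le k k' -> k' = k.

Definition total_in (Th : {fset pfun}) (k : pfun) : Prop :=
  (forall w, w \in domf k <-> in_events Th w) /\
  (forall w v, k.[? w] = Some v -> in_inputs Th w v).

Definition free_choice (Th : {fset pfun}) : Prop :=
  forall k, maximal_Ext Th k <-> total_in Th k.

Definition tips (Th : {fset pfun}) (h : pfun) (w : Ev) : Prop :=
  w \in domf h /\ ~ (exists k, [/\ Ext Th k, pf_lt k h & w \in domf k]).

Definition causally_complete (Th : {fset pfun}) : Prop :=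
  free_choice Th /\ forall h, h \in Th -> exists! w, tips Th h w.

Definition space_le (Th1 Th2 : {fset pfun}) : Prop :=
  forall k, Ext Th2 k -> Ext Th1 k.

Definition CC (Th Th1 : {fset pfun}) : Prop :=
  [/\ space Th1, space_le Th1 Th, causally_complete Th1 &
      forall Th2, space Th2 -> space_le Th2 Th -> causally_complete Th2 ->
        space_le Th1 Th2 -> Th2 = Th1].

End Histories.

From mathcomp Require Import all_boot finmap boolp.

(* ∨-prime spaces are determined by their extensions, since every element of a
   space has a private event that pins it down inside Ext; and every element of
   a causal completion of Θ is a partial function in ∏_{ω ∈ E^Θ} I^Θ_ω.  Hence a
   completion X of Θ ∪ Θ' is the union of its parts [restr Θ X] and [restr Θ' X]
   living over E^Θ and over E^Θ'.  Because these event sets are disjoint,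
   ∨-primality, Ext, tips and free choice all decompose along the two parts, so
   the union of a causally complete space below Θ and one below Θ' is causally
   complete below Θ ∪ Θ', and maximality transfers in both directions. *)

Set Implicit Arguments. Unset Strict Implicit. Unset Printing Implicit Defensive.
Local Open Scope fset_scope.
Local Open Scope fmap_scope.

Lemma fsetUr_cancel (K : choiceType) (A B C : {fset K}) :
  [disjoint A & C] -> [disjoint B & C] -> A `|` C = B `|` C -> A = B.
Proof.
have UDK D : [disjoint D & C] -> (D `|` C) `\` C = D.
  by move=> /fsetDidPl dD; rewrite fsetDUl fsetDv fsetU0 dD.
by move=> dA dB eqAB; rewrite -(UDK A dA) -(UDK B dB) eqAB.
Qed.

Section Histories.
Variables (Ev V : choiceType).
Implicit Types (f g h k t : pfun Ev V) (A B X Y Th : {fset pfun Ev V}).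

Lemma mem_domf_fnd f x : (x \in domf f) = isSome f.[? x].
Proof. by rewrite fndSome. Qed.

Lemma pf_leP f g :
  pf_le f g <-> forall x v, f.[? x] = Some v -> g.[? x] = Some v.
Proof.
split=> [[_ eq_fg] x v fx | le_fg]; first by rewrite eq_fg // mem_domf_fnd fx.
have eq_fg x : x \in domf f -> g.[? x] = f.[? x].
  by rewrite mem_domf_fnd; case fx: f.[? x] => [v|] // _; apply: le_fg.
split=> //; apply/fsubsetP=> x xf.
by rewrite mem_domf_fnd eq_fg // -mem_domf_fnd.
Qed.

Lemma pf_le_refl f : pf_le f f.
Proof. by apply/pf_leP. Qed.

Lemma pf_le_trans f g h : pf_le f g -> pf_le g h -> pf_le f h.
Proof. by move=> /pf_leP fg /pf_leP gh; apply/pf_leP=> x v /fg /gh. Qed.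

Lemma pf_le_mem f g x : pf_le f g -> x \in domf f -> x \in domf g.
Proof. by case=> /fsubsetP fg _ /fg. Qed.

Lemma pf_le_eq f g : pf_le f g -> domf g `<=` domf f -> f = g.
Proof.
move=> [_ eq_fg] gf; apply/fmapP=> x.
have [xf | xNf] := boolP (x \in domf f); first by rewrite eq_fg.
by rewrite !not_fnd //; apply: contra xNf; apply: (fsubsetP gf).
Qed.

Lemma pf_le_anti f g : pf_le f g -> pf_le g f -> f = g.
Proof. by move=> fg [gf _]; apply: pf_le_eq fg gf. Qed.

Lemma pf_le_restrict f (D : {fset Ev}) : pf_le f.[& D] f.
Proof. by apply/pf_leP=> x v; rewrite fnd_restrict; case: ifP. Qed.

Lemma pf_le_catr f g : pf_le g (f + g).
Proof. by apply/pf_leP=> x v gx; rewrite fnd_cat mem_domf_fnd gx. Qed.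

Lemma compatible_bounded (F : {fset pfun Ev V}) k :
  (forall f, f \in F -> pf_le f k) -> compatible F.
Proof. by move=> Fk f g /Fk[_ fk] /Fk[_ gk] x xf xg; rewrite -fk // -gk. Qed.

Lemma ExtP Th k : Ext Th k <->
  (exists2 g, g \in Th & pf_le g k) /\
  forall x, x \in domf k -> exists2 g, g \in Th & pf_le g k /\ x \in domf g.
Proof.
split=> [[F [F0 /fsubsetP FTh _ [dom_k below_k]]] | [[g0 g0Th g0k] cover_k]].
  split=> [|x /dom_k[g gF xg]]; last by exists g; [apply: FTh | split; [apply: below_k|]].
  have [F0' | [g gF]] := fset_0Vmem F; first by rewrite F0' eqxx in F0.
  by exists g; [apply: FTh | apply: below_k].
pose F := [fset g in Th | `[< pf_le g k >]].
have memF g : g \in F = (g \in Th) && `[< pf_le g k >] by rewrite !inE.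
exists F; split.
- by apply/fset0Pn; exists g0; rewrite memF g0Th; apply/asboolP.
- by apply/fsubsetP=> g; rewrite memF => /andP[].
- by apply: (@compatible_bounded F k) => g; rewrite memF => /andP[_ /asboolP].
split=> [x|g]; last by rewrite memF => /andP[_ /asboolP].
split=> [/cover_k[g gTh [gk xg]] | [g]].
  by exists g; rewrite // memF gTh; apply/asboolP.
by rewrite memF => /andP[_ /asboolP gk]; apply: pf_le_mem.
Qed.

Lemma Ext_mem Th h : h \in Th -> Ext Th h.
Proof.
have hh := pf_le_refl h.
by move=> hTh; apply/ExtP; split=> [|x xh]; exists h.
Qed.

Lemma space_leP A B : space_le A B <-> forall g, g \in B -> Ext A g.
Proof.
split=> [leAB g gB | ExtA k /ExtP[[g0 g0B g0k] cover_k]]; first exact/leAB/Ext_mem.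
apply/ExtP; split.
  have /ExtP[[g gA gg0] _] := ExtA _ g0B.
  by exists g => //; apply: pf_le_trans gg0 g0k.
move=> x /cover_k[g gB [gk xg]].
have /ExtP[_ /(_ x xg)[e eA [eg xe]]] := ExtA _ gB.
by exists e => //; split=> //; apply: pf_le_trans eg gk.
Qed.

Lemma space_le_trans A B C : space_le A B -> space_le B C -> space_le A C.
Proof. by move=> AB BC k /BC /AB. Qed.

Lemma fsubset_space_le A B : A `<=` B -> space_le B A.
Proof. by move=> /fsubsetP AB; apply/space_leP=> g /AB /Ext_mem. Qed.

Lemma vee_primeP Th : vee_prime Th <->
  forall k, k \in Th -> exists2 x, x \in domf k &
    forall g, g \in Th -> pf_lt g k -> x \notin domf g.
Proof.
split=> [vpTh k kTh | private F /fsubsetP FTh _ k [dom_k below_k] kTh].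
  apply: contrapT => noPrivate.
  pose F := [fset g in Th | `[< pf_lt g k >]].
  have memF g : g \in F = (g \in Th) && `[< pf_lt g k >] by rewrite !inE.
  have cover_k x : x \in domf k -> exists2 g, g \in F & x \in domf g.
    move=> xk; apply: contrapT => noCover; apply: noPrivate; exists x => // g gTh gk.
    by apply/negP=> xg; apply: noCover; exists g; rewrite // memF gTh; apply/asboolP.
  have : k \in F.
    apply: (vpTh F) kTh.
    - by apply/fsubsetP=> g; rewrite memF => /andP[].
    - by apply: (@compatible_bounded F k) => g; rewrite memF => /andP[_ /asboolP[]].
    split=> [x|g]; last by rewrite memF => /andP[_ /asboolP[]].
    by split=> [/cover_k | [g]] //; rewrite memF => /andP[_ /asboolP[gk _]]; apply: pf_le_mem.
  by rewrite memF => /andP[_ /asboolP[_]].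
apply: contrapT => kNF; have [x /dom_k[f fF xf] priv_x] := private k kTh.
have fk : pf_lt f k by split; [apply: below_k | move=> fk; rewrite -fk in kNF].
by move: (priv_x f (FTh f fF) fk); rewrite xf.
Qed.

Lemma space_domf_nonempty Th h : space Th -> h \in Th -> exists x, x \in domf h.
Proof. by move=> /vee_primeP vpTh /vpTh[x xh _]; exists x. Qed.

Lemma vee_prime_fsubset A B : A `<=` B -> space B -> space A.
Proof.
move=> /fsubsetP AB /vee_primeP vpB; apply/vee_primeP=> k /AB /vpB[x xk priv_x].
by exists x => // g /AB; apply: priv_x.
Qed.

Lemma space_le_anti A B : space A -> space B -> space_le A B -> space_le B A -> A = B.
Proof.
wlog suff sub : A B / space A -> space_le A B -> space_le B A -> A `<=` B.
  by move=> sA sB AB BA; apply/eqP; rewrite eqEfsubset !sub.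
move=> /vee_primeP vpA AB BA; apply/fsubsetP=> h hA; apply: contrapT => hNB.
have [x xh priv_x] := vpA h hA.
have /ExtP[_ /(_ x xh)[g gB [gh xg]]] := BA h (Ext_mem hA).
have /ExtP[_ /(_ x xg)[e eA [eg xe]]] := AB g (Ext_mem gB).
have eh : pf_lt e h.
  split=> [|ehe]; first exact: pf_le_trans eg gh.
  by subst e; apply: hNB; rewrite -(pf_le_anti gh eg).
by move: (priv_x e eA eh); rewrite xe.
Qed.

Definition in_product Th k :=
  (forall w, w \in domf k -> in_events Th w) /\
  (forall w v, k.[? w] = Some v -> in_inputs Th w v).

Lemma in_product_mem Th h : h \in Th -> in_product Th h.
Proof. by move=> hTh; split=> [w|w v]; exists h. Qed.

Lemma in_product_le Th f k : pf_le f k -> in_product Th k -> in_product Th f.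
Proof.
move=> fk [dom_k val_k]; split=> [w /(pf_le_mem fk) /dom_k // | w v].
by move/pf_leP: fk => fk /fk /val_k.
Qed.

Lemma in_product_cat Th f g :
  in_product Th f -> in_product Th g -> in_product Th (f + g).
Proof.
move=> [dom_f val_f] [dom_g val_g]; split=> [w | w v].
  by rewrite domf_cat in_fsetU => /orP[/dom_f | /dom_g].
by rewrite fnd_cat; case: ifP => _; [apply: val_g | apply: val_f].
Qed.

Lemma in_product_Ext Th A k :
  (forall g, g \in A -> in_product Th g) -> Ext A k -> in_product Th k.
Proof.
move=> prodA /ExtP[_ cover_k]; split=> [w /cover_k[g /prodA[dom_g _] [_ /dom_g]] // | w v kw].
have /cover_k[g /prodA[_ val_g] [[_ eq_gk] wg]] : w \in domf k by rewrite mem_domf_fnd kw.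
by apply: val_g; rewrite -eq_gk.
Qed.

Lemma Ext_in_product Th k : Ext Th k -> in_product Th k.
Proof. exact/in_product_Ext/in_product_mem. Qed.

Lemma in_product_extend Th k :
  in_product Th k -> exists2 t, pf_le k t & total_in Th t.
Proof.
move=> prod_k.
have [t kt [prod_t cover_t]] : exists2 t, pf_le k t &
    in_product Th t /\ {in enum_fset Th, forall h, domf h `<=` domf t}.
  have : {subset enum_fset Th <= Th} by [].
  elim: (enum_fset Th) => [_ | h s IH sTh]; first by exists k; [apply: pf_le_refl | split].
  have hTh : h \in Th by apply: sTh; rewrite inE eqxx.
  case: IH => [g gs | t kt [prod_t cover_t]]; first by apply: sTh; rewrite inE gs orbT.
  (* [h + t] keeps the values of [t] and adds those of [h] elsewhere. *)
  exists (h + t); first exact: pf_le_trans kt (pf_le_catr h t).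
  split; first exact: in_product_cat (in_product_mem hTh) prod_t.
  move=> g; rewrite inE domf_cat => /predU1P[-> | /cover_t gt]; first exact: fsubsetUl.
  exact: fsubset_trans gt (fsubsetUr _ _).
exists t => //; split=> [w|]; last by case: prod_t.
split=> [|[h hTh /(fsubsetP (cover_t h hTh)) //]].
by case: prod_t => dom_t _ /dom_t.
Qed.

Lemma free_choiceP Th : free_choice Th <-> forall t, total_in Th t -> Ext Th t.
Proof.
split=> [fc t /fc[] // | total_Ext k]; split.
  case=> Ext_k max_k; have [t kt tot_t] := in_product_extend (Ext_in_product Ext_k).
  by rewrite -(max_k t (total_Ext t tot_t) kt).
move=> tot_k; split=> [|k' /Ext_in_product[dom_k' _] kk']; first exact: total_Ext.
by symmetry; apply: pf_le_eq kk' _; apply/fsubsetP=> w /dom_k' /(proj1 tot_k w).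
Qed.

Lemma space_le_events A B w : space_le A B -> in_events B w -> in_events A w.
Proof.
move=> AB [h hB wh]; have /ExtP[_ /(_ w wh)[g gA [_ wg]]] := AB h (Ext_mem hB).
by exists g.
Qed.

Lemma in_events_fsetU A B w :
  in_events (A `|` B) w <-> in_events A w \/ in_events B w.
Proof.
split=> [[h] | [[h hA wh] | [h hB wh]]]; last by exists h; rewrite // in_fsetU hB orbT.
  by rewrite in_fsetU => /orP[hA | hB] wh; [left | right]; exists h.
by exists h; rewrite // in_fsetU hA.
Qed.

Definition events Th := \bigcup_(h <- Th) domf h.

Lemma in_eventsP Th w : reflect (in_events Th w) (w \in events Th).
Proof.
apply: (iffP idP) => [/bigfcupP[h /andP[hTh _] wh] | [h hTh wh]]; first by exists h.
by apply/bigfcupP; exists h; rewrite ?hTh.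
Qed.

Definition restr Th X := [fset h in X | `[< in_product Th h >]].

Lemma restrP Th X h : reflect (h \in X /\ in_product Th h) (h \in restr Th X).
Proof. by rewrite !inE; apply: (iffP andP) => -[hX /asboolP]. Qed.

Lemma restr_fsubset Th X : restr Th X `<=` X.
Proof. by apply/fsubsetP=> h /restrP[]. Qed.

Lemma Ext_restr Th X k : Ext (restr Th X) k <-> Ext X k /\ in_product Th k.
Proof.
split=> [Ext_k | [/ExtP[[g0 g0X g0k] cover_k] prod_k]].
  split; first exact: fsubset_space_le (restr_fsubset Th X) k Ext_k.
  by apply: in_product_Ext Ext_k => h /restrP[].
apply/ExtP; split.
  by exists g0 => //; apply/restrP; split=> //; apply: in_product_le prod_k.
move=> x /cover_k[g gX [gk xg]]; exists g => //.
by apply/restrP; split=> //; apply: in_product_le prod_k.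
Qed.

Definition candidate Th X := [/\ space X, space_le X Th & causally_complete X].

Lemma CC_candidate Th X : CC Th X <->
  candidate Th X /\ forall Y, candidate Th Y -> space_le X Y -> Y = X.
Proof.
split=> [[sX leX ccX maxX] | [[sX leX ccX] maxX]]; split=> // Y.
  by case; apply: maxX.
by move=> sY leY ccY; apply: maxX.
Qed.

Lemma candidate_fsubset Th Th0 X :
  Th0 `<=` Th -> candidate Th X -> candidate Th0 X.
Proof.
by move=> /fsubset_space_le le0 [sX leX ccX]; split=> //; apply: space_le_trans leX le0.
Qed.

Lemma tips_eq A B h :
  (forall k, pf_lt k h -> Ext A k <-> Ext B k) -> tips A h = tips B h.
Proof.
move=> eqAB; apply/funext=> w; apply/propext.
by split=> -[wh noLower]; split=> // -[k [Ext_k kh wk]]; apply: noLower; exists k;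
  split=> //; apply/(eqAB k kh).
Qed.

Lemma restr_candidate Th X :
  free_choice Th -> candidate Th X -> candidate Th (restr Th X).
Proof.
move=> fcTh [sX leX [_ tipsX]].
have leR : space_le (restr Th X) Th.
  by move=> k Ext_k; apply/Ext_restr; split; [apply: leX | apply: Ext_in_product].
split=> //; first exact: vee_prime_fsubset (restr_fsubset Th X) sX.
split.
  apply/free_choiceP=> t [dom_t val_t]; apply: (leR); apply: (proj1 (free_choiceP Th) fcTh).
  split=> [w | w v /val_t[h /restrP[_ [_ val_h]] /val_h] //].
  by split=> [/dom_t[h /restrP[_ [dom_h _]] /dom_h] // | /(space_le_events leR) /dom_t].
move=> h /restrP[hX prod_h]; rewrite -(tips_eq (A := X)) => [|k [kh _]]; first exact: tipsX.
by rewrite Ext_restr; split=> [Ext_k | []] //; split=> //; apply: in_product_le kh prod_h.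
Qed.

Lemma CC_in_product Th X h : free_choice Th -> CC Th X -> h \in X -> in_product Th h.
Proof.
move=> fcTh /CC_candidate[cX maxX].
have <- : restr Th X = X.
  by apply: maxX; [apply: restr_candidate | move=> k /Ext_restr[]].
by move=> /restrP[].
Qed.

Definition disjoint_events A B := forall w, in_events A w -> ~ in_events B w.

Lemma disjoint_events_sym A B : disjoint_events A B -> disjoint_events B A.
Proof. by move=> dAB w wB wA; apply: dAB wA wB. Qed.

Lemma disjoint_events_in_product Th Th' A B : disjoint_events Th Th' ->
  (forall g, g \in A -> in_product Th g) -> (forall g, g \in B -> in_product Th' g) ->
  disjoint_events A B.
Proof.
move=> dTh prodA prodB w [g /prodA[dom_g _] wg] [g' /prodB[dom_g' _] wg'].
exact: dTh (dom_g w wg) (dom_g' w wg').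
Qed.

Lemma disjoint_events_restr Th Th' X Y :
  disjoint_events Th Th' -> disjoint_events (restr Th X) (restr Th' Y).
Proof.
by move=> dTh; apply: disjoint_events_in_product dTh _ _ => g /restrP[].
Qed.

Lemma disjoint_events_fdisjoint A B :
  space A -> disjoint_events A B -> [disjoint A & B].
Proof.
move=> sA dAB; apply/fdisjointP=> h hA; apply/negP=> hB.
have [x xh] := space_domf_nonempty sA hA.
by apply: (dAB x); exists h.
Qed.

Lemma vee_prime_fsetU A B :
  disjoint_events A B -> space A -> space B -> space (A `|` B).
Proof.
move=> dAB sA sB; apply/vee_primeP=> k kAB.
wlog kA : A B dAB sA sB kAB / k \in A.
  move=> wlog_kA; move: (kAB); rewrite in_fsetU => /orP[kA | kB]; first exact: wlog_kA.
  rewrite fsetUC; apply: (wlog_kA B A (disjoint_events_sym dAB) sB sA _ kB).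
  by rewrite in_fsetU kB.
have /vee_primeP/(_ k kA)[x xk priv_x] := sA.
exists x => // g; rewrite in_fsetU => /orP[gA | gB] gk; first exact: priv_x.
by apply/negP=> xg; apply: (dAB x); [exists k | exists g].
Qed.

Lemma Ext_fsetUl A B k : disjoint_events A B -> space B ->
  (forall x, x \in domf k -> in_events A x) -> Ext (A `|` B) k -> Ext A k.
Proof.
move=> dAB sB dom_k.
have inA g : g \in A `|` B -> pf_le g k -> g \in A.
  rewrite in_fsetU => /orP[// | gB gk]; have [x xg] := space_domf_nonempty sB gB.
  by case: (dAB x (dom_k x (pf_le_mem gk xg))); exists g.
case/ExtP=> [[g0 g0AB g0k] cover_k]; apply/ExtP; split; first by exists g0; rewrite ?inA.
by move=> x /cover_k[g gAB [gk xg]]; exists g; rewrite ?inA.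
Qed.

Lemma Ext_join Th f g k : Ext Th f -> Ext Th g -> pf_le f k -> pf_le g k ->
  domf k `<=` domf f `|` domf g -> Ext Th k.
Proof.
move=> /ExtP[[h hTh hf] cover_f] /ExtP[_ cover_g] fk gk /fsubsetP dom_k.
apply/ExtP; split; first by exists h => //; apply: pf_le_trans hf fk.
move=> x /dom_k; rewrite in_fsetU => /orP[/cover_f | /cover_g] [e eTh [e_le xe]].
  by exists e => //; split=> //; apply: pf_le_trans e_le fk.
by exists e => //; split=> //; apply: pf_le_trans e_le gk.
Qed.

Lemma total_in_fsetU_restrict A B t : disjoint_events A B ->
  total_in (A `|` B) t -> total_in A t.[& events A].
Proof.
move=> dAB [dom_t val_t]; split=> [w | w v].
  rewrite domf_restrict in_fsetI; split=> [/andP[/in_eventsP] // | wA].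
  by rewrite (introT (in_eventsP _ _) wA); apply/dom_t/in_events_fsetU; left.
rewrite fnd_restrict; case: ifP => // /in_eventsP wA /val_t[h].
rewrite in_fsetU => /orP[hA hw | hB hw]; first by exists h.
by case: (dAB w wA); exists h; rewrite // mem_domf_fnd hw.
Qed.

Lemma free_choice_fsetU A B : disjoint_events A B ->
  free_choice A -> free_choice B -> free_choice (A `|` B).
Proof.
move=> dAB /free_choiceP fcA /free_choiceP fcB; apply/free_choiceP=> t tot_t.
have tot_tA := total_in_fsetU_restrict dAB tot_t.
have tot_tB : total_in B t.[& events B].
  by apply: total_in_fsetU_restrict (disjoint_events_sym dAB) _; rewrite fsetUC.
apply: (Ext_join (f := t.[& events A]) (g := t.[& events B])).
- exact: fsubset_space_le (fsubsetUl A B) _ (fcA _ tot_tA).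
- exact: fsubset_space_le (fsubsetUr A B) _ (fcB _ tot_tB).
- exact: pf_le_restrict.
- exact: pf_le_restrict.
apply/fsubsetP=> w wt; rewrite !domf_restrict in_fsetU !in_fsetI wt !andbT.
by case/(proj1 tot_t)/in_events_fsetU: wt => /in_eventsP ->; rewrite ?orbT.
Qed.

Lemma tips_fsetUl A B h : disjoint_events A B -> space B -> h \in A ->
  tips (A `|` B) h = tips A h.
Proof.
move=> dAB sB hA; apply: tips_eq => k [kh _].
split; last exact: fsubset_space_le (fsubsetUl A B) k.
by apply: Ext_fsetUl dAB sB _ => x /(pf_le_mem kh) xh; exists h.
Qed.

Lemma causally_complete_fsetU A B : disjoint_events A B -> space A -> space B ->
  causally_complete A -> causally_complete B -> causally_complete (A `|` B).
Proof.
move=> dAB sA sB [fcA tipsA] [fcB tipsB]; split; first exact: free_choice_fsetU.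
move=> h; rewrite in_fsetU => /orP[hA | hB]; first by rewrite tips_fsetUl //; apply: tipsA.
rewrite fsetUC tips_fsetUl //; first exact: tipsB.
exact: disjoint_events_sym.
Qed.

Lemma space_le_fsetU A B Th Th' :
  space_le A Th -> space_le B Th' -> space_le (A `|` B) (Th `|` Th').
Proof.
move=> leA leB; apply/space_leP=> g; rewrite in_fsetU => /orP[/Ext_mem/leA | /Ext_mem/leB].
  exact: fsubset_space_le (fsubsetUl A B) g.
exact: fsubset_space_le (fsubsetUr A B) g.
Qed.

Lemma candidate_fsetU Th Th' A B : disjoint_events A B ->
  candidate Th A -> candidate Th' B -> candidate (Th `|` Th') (A `|` B).
Proof.
move=> dAB [sA leA ccA] [sB leB ccB]; split.
- exact: vee_prime_fsetU.
- exact: space_le_fsetU.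
- exact: causally_complete_fsetU.
Qed.

Lemma space_le_restr Th A B Y : disjoint_events A B -> space B -> space_le A Th ->
  space_le (A `|` B) Y -> space_le A (restr Th Y).
Proof.
move=> dAB sB leA leY k /Ext_restr[/leY Ext_k [dom_k _]].
by apply: Ext_fsetUl dAB sB _ Ext_k => x /dom_k; apply: space_le_events.
Qed.
End Histories.

Section ParallelComposition.
Variables (Ev V : choiceType) (Th Th' : {fset pfun Ev V}).
Hypotheses (fcTh : free_choice Th) (fcTh' : free_choice Th')
  (disjTh : disjoint_events Th Th').

Lemma candidate_restr_fsetUl X : candidate (Th `|` Th') X -> candidate Th (restr Th X).
Proof. by move=> /(candidate_fsubset (fsubsetUl Th Th')); apply: restr_candidate. Qed.

Lemma candidate_restr_fsetUr X : candidate (Th `|` Th') X -> candidate Th' (restr Th' X).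
Proof. by move=> /(candidate_fsubset (fsubsetUr Th Th')); apply: restr_candidate. Qed.

Lemma restr_fdisjoint X Y : space X -> [disjoint restr Th X & restr Th' Y].
Proof.
move=> sX; apply: disjoint_events_fdisjoint _ (disjoint_events_restr disjTh).
exact: vee_prime_fsubset (restr_fsubset Th X) sX.
Qed.

Lemma CC_restr_split X : CC (Th `|` Th') X -> restr Th X `|` restr Th' X = X.
Proof.
case/CC_candidate=> cX maxX; apply: maxX.
  apply: candidate_fsetU (disjoint_events_restr disjTh) _ _.
  - exact: candidate_restr_fsetUl.
  - exact: candidate_restr_fsetUr.
by apply: fsubset_space_le; rewrite fsubUset !restr_fsubset.
Qed.

Lemma CC_restr X : CC (Th `|` Th') X -> CC Th (restr Th X).
Proof.
move=> ccX; have splitX := CC_restr_split ccX.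
case/CC_candidate: ccX => cX maxX; have [sX _ _] := cX.
apply/CC_candidate; split=> [|Y cY leY]; first exact: candidate_restr_fsetUl.
have [sY _ _] := cY.
have splitY : restr Th Y `|` restr Th' X = X.
  apply: maxX; first apply: candidate_fsetU (disjoint_events_restr disjTh) _ _.
  - exact: restr_candidate.
  - exact: candidate_restr_fsetUr.
  apply/space_leP=> g; rewrite in_fsetU => /orP[/restrP[gY _] | /restrP[gX _]].
    exact/(fsubset_space_le (restr_fsubset Th X))/leY/Ext_mem.
  exact: Ext_mem.
have eqY : restr Th Y = restr Th X.
  by apply: (fsetUr_cancel (C := restr Th' X)); rewrite ?restr_fdisjoint ?splitX.
rewrite -eqY in leY *; apply: (space_le_anti _ _ _ leY) => //.
  exact: vee_prime_fsubset (restr_fsubset Th Y) sY.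
exact: fsubset_space_le (restr_fsubset Th Y).
Qed.

Lemma CC_fsetU A B : CC Th A -> CC Th' B -> CC (Th `|` Th') (A `|` B).
Proof.
move=> ccA ccB.
have dAB : disjoint_events A B := disjoint_events_in_product disjTh
  (fun g => CC_in_product fcTh ccA) (fun g => CC_in_product fcTh' ccB).
case/CC_candidate: ccA => cA maxA; case/CC_candidate: ccB => cB maxB.
have [[sA leA _] [sB leB _]] := (cA, cB).
apply/CC_candidate; split=> [|Y cY leY]; first exact: candidate_fsetU.
have eqA : restr Th Y = A.
  apply: maxA; first exact: candidate_restr_fsetUl.
  exact: space_le_restr dAB sB leA leY.
have eqB : restr Th' Y = B.
  apply: maxB; first exact: candidate_restr_fsetUr.
  by apply: space_le_restr (disjoint_events_sym dAB) sA leB _; rewrite fsetUC.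
have [sY _ _] := cY; apply: (space_le_anti _ _ _ leY) => //.
  exact: vee_prime_fsetU.
by rewrite -eqA -eqB; apply: fsubset_space_le; rewrite fsubUset !restr_fsubset.
Qed.
End ParallelComposition.

Theorem theorem1 (Ev V : choiceType) (Th Th' : {fset pfun Ev V}) :
  space Th -> space Th' -> free_choice Th -> free_choice Th' ->
  (forall w, in_events Th w -> ~ in_events Th' w) ->
  forall Th2 : {fset pfun Ev V},
    CC (Th `|` Th') Th2 <->
    exists Thh Thh', [/\ CC Th Thh, CC Th' Thh' & Th2 = Thh `|` Thh'].
Proof.
(* Only the completions, not Θ and Θ' themselves, need to be ∨-prime. *)
move=> _ _ fcTh fcTh' disjTh X; split=> [ccX | [A [B [ccA ccB ->]]]]; last exact: CC_fsetU.
exists (restr Th X), (restr Th' X); split.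
- exact: CC_restr fcTh fcTh' disjTh X ccX.
- by rewrite fsetUC in ccX; apply: CC_restr fcTh' fcTh (disjoint_events_sym disjTh) X ccX.
- by rewrite CC_restr_split.
Qed.
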